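(* Let $\{\Psi^{(j)}\}_{j\ge0}$ be a sequence of Harris ergodic Markov chains, chain $j$ having transition function $K_j$ and invariant probability measure $\Pi_j$. Suppose that for each $j$ there are a function $V_j\ge0$, numbers $\lambda^{(j)}<1$, $L^{(j)}<\infty$, $\varepsilon^{(j)}>0$, $d^{(j)}>2L^{(j)}/(1-\lambda^{(j)})$ and a probability measure $Q_j$ with $\int V_j(x')K_j(x,dx')\le\lambda^{(j)}V_j(x)+L^{(j)}$ for all $x$ and $K_j(x,\cdot)\ge\varepsilon^{(j)}Q_j(\cdot)$ whenever $V_j(x)<d^{(j)}$, and let $\hat\rho^{(j)}=(1-\varepsilon^{(j)})^{r_j}\vee\Big(\frac{1+2L^{(j)}+\lambda^{(j)}d^{(j)}}{1+d^{(j)}}\Big)^{1-r_j}\{1+2(\lambda^{(j)}d^{(j)}+L^{(j)})\}^{r_j}$ for some $r_j\in(0,1)$ chosen so that $\hat\rho^{(j)}<1$. Suppose there is a subsequence $\{j_l\}$ along which at least one of the following holds: (i) $\lambda^{(j_l)}\to1$; (ii) $L^{(j_l)}\to\infty$, while $\varepsilon^{(j_l)}$ is bounded away from 1 and $\lambda^{(j_l)}$ is bounded away from 0; (iii) $\varepsilon^{(j_l)}\to0$. Then $\hat\rho^{(j_l)}\to1$. *)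

From HB Require Import structures.
From mathcomp Require Import all_boot all_order all_algebra.
From mathcomp Require Import all_classical all_reals all_analysis.
Set Implicit Arguments. Unset Strict Implicit. Unset Printing Implicit Defensive.
Import Order.TTheory GRing.Theory Num.Theory.
Import numFieldNormedType.Exports.
Local Open Scope classical_set_scope.
Local Open Scope ring_scope.

Section Defs.
Context {R : realType} {d : measure_display} {T : measurableType d}.

Fixpoint kiter (K : R.-pker T ~> T) (n : nat) (x : T) (A : set T) : \bar R :=
  match n with
  | 0 => \d_x A
  | n'.+1 => (\int[K x]_y kiter K n' y A)%E
  end.

Definition invariant (K : R.-pker T ~> T) (Pi : probability T R) : Prop :=
  forall A, measurable A -> (\int[Pi]_x K x A)%E = Pi A.

Definition harris_ergodic (K : R.-pker T ~> T) (Pi : probability T R) : Prop :=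
  invariant K Pi /\
  forall x (e : R), 0 < e -> exists N : nat, forall n, (N <= n)%N ->
    forall A, measurable A -> (`| kiter K n x A - Pi A | < e%:E)%E.

Definition drift (K : R.-pker T ~> T) (V : T -> R) (lam L : R) : Prop :=
  forall x, (\int[K x]_y (V y)%:E <= (lam * V x + L)%:E)%E.

Definition minorization (K : R.-pker T ~> T) (V : T -> R) (dd eps : R)
  (Q : probability T R) : Prop :=
  forall x, V x < dd -> forall A, measurable A -> (eps%:E * Q A <= K x A)%E.
End Defs.

Definition rho_hat {R : realType} (lam L eps dd r : R) : R :=
  Num.max ((1 - eps) `^ r)
    (((1 + 2 * L + lam * dd) / (1 + dd)) `^ (1 - r) *
     (1 + 2 * (lam * dd + L)) `^ r).

From HB Require Import structures.
From mathcomp Require Import all_boot all_order all_algebra.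
From mathcomp Require Import all_classical all_reals all_analysis.
From mathcomp Require Import lra.
Set Implicit Arguments. Unset Strict Implicit. Unset Printing Implicit Defensive.
Import Order.TTheory GRing.Theory Num.Theory.
Import numFieldNormedType.Exports.
Local Open Scope classical_set_scope.
Local Open Scope ring_scope.

(* The drift gives L >= 0, so
   A = drift_ratio lam L d satisfies lam <= A <= 1 and B = drift_bound lam L d
   satisfies B >= 1 + 2L >= 1.  Hence both 1 - eps and lam B^r bound rho-hat
   from below, which settles (i) and (iii).  For (ii), either r <= delta, and
   then rho-hat >= (1 - eps)^delta, close to 1 for small delta; or r > delta,
   and then lam B^r >= lam (1 + 2L)^delta >= 1 once L is large. *)

Lemma probability_setT_neq0 (R : realType) (d : measure_display)
  (T : measurableType d) (P : probability T R) : [set: T] !=set0.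
Proof.
apply/set0P/eqP => T0.
by move: (probability_setT P); rewrite T0 measure0 => /eqP; rewrite eq_sym onee_eq0.
Qed.

Lemma drift_const_ge0 (R : realType) (d : measure_display) (T : measurableType d)
  (K : R.-pker T ~> T) (V : T -> R) (lam L : R) (x0 : T) :
  lam < 1 -> measurable_fun setT V -> (forall x, 0 <= V x) ->
  drift K V lam L -> 0 <= L.
Proof.
move=> lam_lt1 mV V_ge0 HV.
have lbV_le x c : 0 <= c -> (forall y, c <= V y) -> c <= lam * V x + L.
  move=> c_ge0 cV; rewrite -lee_fin (le_trans _ (HV x))//.
  have -> : c%:E = (\int[K x]_(y in setT) (cst c%:E) y)%E.
    by rewrite integral_cst// prob_kernel mule1.
  apply: ge0_le_integral => //= [|y _]; last by rewrite lee_fin.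
  exact/measurable_realfun.measurable_EFinP.
have [lam_le0|lam_gt0] := leP lam 0.
  have := lbV_le x0 _ (lexx 0) V_ge0.
  have := mulr_le0_ge0 lam_le0 (V_ge0 x0); lra.
pose m := inf (range V).
have lb0 : lbound (range V) 0 by move=> _ [y _ <-].
have m_ge0 : 0 <= m by apply: lb_le_inf => //; exists (V x0), x0.
have m_le y : m <= V y by apply: (ge_inf (ex_intro _ 0 lb0)); exists y.
(* (m - L) / lam is a lower bound of V, hence at most its infimum m. *)
have : (m - L) / lam <= m.
  apply: lb_le_inf => [|_ [y _ <-]]; first by exists (V x0), x0.
  by rewrite ler_pdivrMr // mulrC; have := lbV_le y _ m_ge0 m_le; lra.
rewrite ler_pdivrMr // => h.
have : 0 <= (1 - lam) * m by rewrite mulr_ge0 // subr_ge0 ltW.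
rewrite mulrBl mul1r; lra.
Qed.

Section RhoHatBounds.
Variable R : realType.

Definition drift_ratio (lam L dd : R) := (1 + 2 * L + lam * dd) / (1 + dd).
Definition drift_bound (lam L dd : R) := 1 + 2 * (lam * dd + L).

Variables (lam L eps dd r : R).
Hypothesis r01 : 0 < r < 1.

Lemma rho_hatE : rho_hat lam L eps dd r =
  Num.max ((1 - eps) `^ r)
    (drift_ratio lam L dd `^ (1 - r) * drift_bound lam L dd `^ r).
Proof. by []. Qed.

Lemma rho_hat_ge_1_sub_eps : 0 < eps < 1 -> 1 - eps <= rho_hat lam L eps dd r.
Proof.
case/andP: r01 => _ r_lt1; case/andP => eps_gt0 eps_lt1.
have eps01' : 0 < 1 - eps <= 1 by apply/andP; split; lra.
by rewrite rho_hatE le_max ger1_powR // ltW.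
Qed.

Hypotheses (L_ge0 : 0 <= L) (lam_gt0 : 0 < lam) (lam_lt1 : lam < 1).
Hypothesis dd_gt : 2 * L / (1 - lam) < dd.

Let dd_ge0 : 0 <= dd.
Proof.
apply: le_trans (ltW dd_gt).
by rewrite divr_ge0 ?mulr_ge0 // subr_ge0 ltW.
Qed.

Let dd1_gt0 : 0 < 1 + dd. Proof. by have := dd_ge0; lra. Qed.

Lemma drift_ratio_ge_lam : lam <= drift_ratio lam L dd.
Proof. by rewrite /drift_ratio ler_pdivlMr //; move: L_ge0 lam_lt1; lra. Qed.

Lemma drift_ratio_le1 : drift_ratio lam L dd <= 1.
Proof.
move: dd_gt; rewrite ltr_pdivrMr ?subr_gt0 // => dd_gt'.
by rewrite /drift_ratio ler_pdivrMr //; move: lam_gt0; lra.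
Qed.

Lemma drift_bound_ge : 1 + 2 * L <= drift_bound lam L dd.
Proof. by have := mulr_ge0 (ltW lam_gt0) dd_ge0; rewrite /drift_bound; lra. Qed.

Lemma rho_hat_ge_drift_bound : lam * drift_bound lam L dd `^ r <= rho_hat lam L eps dd r.
Proof.
rewrite rho_hatE le_max ler_wpM2r ?powR_ge0 ?orbT //.
have ratio_gt0 := lt_le_trans lam_gt0 drift_ratio_ge_lam.
apply: le_trans drift_ratio_ge_lam (ger1_powR _ _); last by move: r01 => /andP[]; lra.
by rewrite ratio_gt0 drift_ratio_le1.
Qed.

Lemma rho_hat_ge_lam : lam <= rho_hat lam L eps dd r.
Proof.
apply: le_trans rho_hat_ge_drift_bound; rewrite ler_peMr ?(ltW lam_gt0) //.
rewrite -[leLHS](powRr0 (drift_bound lam L dd)).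
apply: ler_powR; first by have := drift_bound_ge; move: L_ge0; lra.
by case/andP: r01 => /ltW.
Qed.

Lemma rho_hat_ge_powR (c c' delta : R) : 0 < delta -> eps <= c -> 0 <= c < 1 ->
  0 < c' <= lam -> c'^-1 <= (1 + 2 * L) `^ delta ->
  (1 - c) `^ delta <= rho_hat lam L eps dd r.
Proof.
move=> delta_gt0 eps_le_c /andP[c_ge0 c_lt1] /andP[c'_gt0 c'_le_lam] c'_le.
have c01 : 0 < 1 - c <= 1 by apply/andP; split; lra.
have [r_le|r_gt] := leP r delta.
  rewrite rho_hatE le_max; apply/orP; left.
  apply: le_trans (ger_powR c01 r_le) _.
  by apply: ge0_ler_powR; rewrite ?nnegrE; move: r01 => /andP[]; lra.
have powR_le1 : (1 - c) `^ delta <= 1.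
  by rewrite -[leRHS](powRr0 (1 - c)); apply: ger_powR => //; exact: ltW.
apply: le_trans powR_le1 (le_trans _ rho_hat_ge_drift_bound).
have B_ge : (1 + 2 * L) `^ delta <= drift_bound lam L dd `^ r.
  have B_ge1 : 1 <= drift_bound lam L dd by have := drift_bound_ge; move: L_ge0; lra.
  apply: le_trans (ler_powR B_ge1 (ltW r_gt)).
  by apply: ge0_ler_powR drift_bound_ge; rewrite ?nnegrE; move: L_ge0 B_ge1; lra.
rewrite -(mulfV (lt0r_neq0 c'_gt0)).
by apply: ler_pM (le_trans c'_le B_ge) => //; rewrite ?invr_ge0 ltW.
Qed.

End RhoHatBounds.

Lemma rho_hat_ge_of_large_drift (R : realType) (e c c' : R) :
  0 < e < 1 -> 0 < c < 1 -> 0 < c' ->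
  exists M : R, forall lam L eps dd r : R, 0 < r < 1 -> 0 <= L -> lam < 1 ->
    2 * L / (1 - lam) < dd -> eps <= c -> c' <= lam -> M <= L ->
    1 - e <= rho_hat lam L eps dd r.
Proof.
move=> /andP[e_gt0 e_lt1] /andP[c_gt0 c_lt1] c'_gt0.
have ln_e_lt0 : ln (1 - e) < 0 by rewrite ln_lt0 //; apply/andP; split; lra.
have ln_c_lt0 : ln (1 - c) < 0 by rewrite ln_lt0 //; apply/andP; split; lra.
pose delta := ln (1 - e) / ln (1 - c).
have delta_gt0 : 0 < delta by rewrite /delta -mulrNN -invrN divr_gt0 ?oppr_gt0.
have powR_delta : (1 - c) `^ delta = 1 - e.
  rewrite /powR gt_eqF; last lra.
  by rewrite /delta -mulrA mulVf ?lt_eqF // mulr1 lnK // posrE; lra.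
exists (((c'^-1) `^ delta^-1 - 1) / 2) => lam L eps dd r r01 L_ge0 lam_lt1 dd_gt
  eps_le_c c'_le_lam M_le.
have lam_gt0 := lt_le_trans c'_gt0 c'_le_lam.
rewrite -powR_delta.
apply: (rho_hat_ge_powR (c' := c') r01 L_ge0 lam_gt0 lam_lt1 dd_gt delta_gt0 eps_le_c);
  rewrite ?c'_gt0 ?c'_le_lam ?c_lt1 ?(ltW c_gt0) //.
have -> : c'^-1 = ((c'^-1) `^ delta^-1) `^ delta.
  by rewrite -powRrM mulVf ?gt_eqF // powRr1 // invr_ge0 ltW.
apply: (ge0_ler_powR (ltW delta_gt0)); rewrite ?nnegrE ?powR_ge0 //; first lra.
by move: M_le; rewrite ler_pdivrMr //; lra.
Qed.

Lemma cvg_to1_of_le1 (R : realType) (u : nat -> R) : (forall n, u n <= 1) ->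
  (forall e, 0 < e < 1 -> \forall n \near \oo, 1 - e <= u n) -> u @ \oo --> (1 : R).
Proof.
move=> u_le1 u_near; apply/cvgrPdist_le => e e_gt0.
have e'01 : 0 < Num.min e (1 / 2) < 1.
  by rewrite lt_min e_gt0 /=; apply/andP; split; [lra | rewrite gt_min; lra].
apply: filterS (u_near _ e'01) => n u_ge.
have e'_le : Num.min e (1 / 2) <= e by rewrite ge_min lexx.
by rewrite ger0_norm ?subr_ge0 //; lra.
Qed.

Theorem proposition1 (R : realType)
  (dsp : nat -> measure_display) (T : forall j, measurableType (dsp j))
  (K : forall j, R.-pker (T j) ~> (T j))
  (Pi : forall j, probability (T j) R)
  (V : forall j, T j -> R)
  (lam L eps dd r : nat -> R)
  (Q : forall j, probability (T j) R)
  (HK : forall j, harris_ergodic (K j) (Pi j))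
  (HVm : forall j, measurable_fun setT (V j))
  (HV0 : forall j x, 0 <= V j x)
  (Hlam : forall j, lam j < 1)
  (Heps : forall j, 0 < eps j)
  (Hd : forall j, 2 * L j / (1 - lam j) < dd j)
  (Hdrift : forall j, drift (K j) (V j) (lam j) (L j))
  (Hminor : forall j, minorization (K j) (V j) (dd j) (eps j) (Q j))
  (Hr : forall j, 0 < r j < 1)
  (Hrho : forall j, rho_hat (lam j) (L j) (eps j) (dd j) (r j) < 1)
  (jl : nat -> nat) (Hjl : forall l, (jl l < jl l.+1)%N)
  (Hcase :
     ((fun l => lam (jl l)) @ \oo --> (1 : R))
     \/ ((fun l => L (jl l)) @ \oo --> +oo
         /\ (exists c : R, c < 1 /\ forall l, eps (jl l) <= c)
         /\ (exists c : R, 0 < c /\ forall l, c <= lam (jl l)))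
     \/ ((fun l => eps (jl l)) @ \oo --> (0 : R))) :
  (fun l => rho_hat (lam (jl l)) (L (jl l)) (eps (jl l)) (dd (jl l)) (r (jl l)))
    @ \oo --> (1 : R).
Proof.
have L_ge0 j : 0 <= L j.
  have [x0 _] := probability_setT_neq0 (Pi j).
  exact: drift_const_ge0 x0 (Hlam j) (HVm j) (HV0 j) (Hdrift j).
apply: cvg_to1_of_le1 => [l|e /andP[e_gt0 e_lt1]]; first exact/ltW/Hrho.
case: Hcase => [lam_to1|[[L_to_oo [[c [c_lt1 eps_le_c]] [c' [c'_gt0 c'_le_lam]]]]|eps_to0]].
- have /(cvgr_gt _ lam_to1) : 1 - e < 1 by lra.
  apply: filterS => l lam_gt.
  apply: le_trans (ltW lam_gt) _; apply: rho_hat_ge_lam => //; lra.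
- have c_gt0 : 0 < c := lt_le_trans (Heps _) (eps_le_c 0%N).
  have e01 : 0 < e < 1 by rewrite e_gt0 e_lt1.
  have c01 : 0 < c < 1 by rewrite c_gt0 c_lt1.
  have [M rho_ge] := rho_hat_ge_of_large_drift e01 c01 c'_gt0.
  apply: filterS ((cvgryPge _).1 L_to_oo M) => l M_le.
  exact: rho_ge.
- apply: filterS (cvgr_lt _ eps_to0 _ e_gt0) => l eps_lt.
  have eps01 : 0 < eps (jl l) < 1 by rewrite Heps /=; lra.
  apply: (le_trans (_ : 1 - e <= 1 - eps (jl l))); first lra.
  exact: rho_hat_ge_1_sub_eps.
Qed.
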